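(* Let $k$ be a field, $X$ a finite non-empty set, and for every $a\in X$ let $\sigma_a,\tau_a:X\to X$ be maps with each $\sigma_a$ bijective; let ${\cal A}$ be the special set-theoretic Yang–Baxter algebra of these data. Suppose $(X,+,\circ)$ is a skew brace and, for all $a,b\in X$, \[\sigma_a(b)=-a+a\circ b,\qquad \sigma_{\sigma_a(b)}(\tau_b(a))=a.\] Then $w_0$ is a central element of ${\cal A}$, where $0$ is the common neutral element of $(X,+)$ and $(X,\circ)$.
   Context: The special set-theoretic Yang–Baxter algebra ${\cal A}$ is the unital associative $k$-algebra generated by $1_{\cal A},h_a,w_a,w_a^{-1}$ ($a\in X$) subject to, for all $a,b\in X$: $h_ah_b=\delta_{a,b}h_a$, $w_a^{-1}w_a=w_aw_a^{-1}=1_{\cal A}$, $w_aw_b=w_{\sigma_a(b)}w_{\tau_b(a)}$, $w_ah_b=h_{\sigma_a(b)}w_a$, and $\sum_{a\in X}h_a=1_{\cal A}$. A skew (left) brace is a set $X$ with two group operations $+$ and $\circ$ such that $a\circ(b+c)=a\circ b-a+a\circ c$ for all $a,b,c\in X$; the neutral elements of the two groups coincide and are denoted $0$. *)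

From HB Require Import structures.
From mathcomp Require Import all_boot all_order all_algebra.
Set Implicit Arguments. Unset Strict Implicit. Unset Printing Implicit Defensive.
Import GRing.Theory.
Local Open Scope ring_scope.

Definition is_group (X : Type) (op : X -> X -> X) (e : X) (inv : X -> X) : Prop :=
  [/\ forall a b c, op a (op b c) = op (op a b) c,
      forall a, op e a = a, forall a, op a e = a,
      forall a, op (inv a) a = e & forall a, op a (inv a) = e].

Definition is_skew_brace (X : Type) (add : X -> X -> X) (neg : X -> X)
    (circ : X -> X -> X) (cinv : X -> X) (zero : X) : Prop :=
  [/\ is_group add zero neg, is_group circ zero cinv &
      forall a b c, circ a (add b c) = add (add (circ a b) (neg a)) (circ a c)].

(* The defining relations of the special set-theoretic Yang-Baxter algebra,
   realised by the families h, w, winv in a k-algebra B. *)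
Definition YB_relations (k : fieldType) (X : finType) (sigma tau : X -> X -> X)
    (B : algType k) (h w winv : X -> B) : Prop :=
  (forall a b, h a * h b = (if a == b then h a else 0)) /\
  (forall a, winv a * w a = 1) /\ (forall a, w a * winv a = 1) /\
  (forall a b, w a * w b = w (sigma a b) * w (tau b a)) /\
  (forall a b, w a * h b = h (sigma a b) * w a) /\
  (\sum_(a : X) h a = 1).

Inductive in_gen_subalg (k : fieldType) (X : finType) (B : algType k)
    (h w winv : X -> B) : B -> Prop :=
  | gen_scal (c : k) : in_gen_subalg h w winv (c%:A)
  | gen_h a : in_gen_subalg h w winv (h a)
  | gen_w a : in_gen_subalg h w winv (w a)
  | gen_winv a : in_gen_subalg h w winv (winv a)
  | gen_add x y : in_gen_subalg h w winv x -> in_gen_subalg h w winv y ->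
                  in_gen_subalg h w winv (x + y)
  | gen_mul x y : in_gen_subalg h w winv x -> in_gen_subalg h w winv y ->
                  in_gen_subalg h w winv (x * y).

(* Since sigma_a(b) = -a + a o b, the permutation sigma_0 is the identity and
   sigma_b fixes 0; the relation sigma_{sigma_a(b)}(tau_b(a)) = a at a = 0 then
   gives sigma_b(tau_b(0)) = 0 = sigma_b(0), so tau_b(0) = 0.  Hence the
   relations w_0 w_b = w_b w_{tau_b(0)} and w_0 h_b = h_b w_0 say that w_0
   commutes with every generator (and so with every w_b^-1), hence with the
   whole algebra. *)
From HB Require Import structures.
From mathcomp Require Import all_boot all_order all_algebra.
Set Implicit Arguments.
Unset Strict Implicit.
Unset Printing Implicit Defensive.

Import GRing.Theory.
Local Open Scope ring_scope.

Lemma group_inv_unit (X : Type) (op : X -> X -> X) (e : X) (inv : X -> X) :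
  is_group op e inv -> inv e = e.
Proof. by case=> _ _ op_x1 op_Vx _; rewrite -[inv e]op_x1 op_Vx. Qed.

Section BraceSigma.

Variables (X : Type) (sigma tau : X -> X -> X).
Variables (add : X -> X -> X) (neg : X -> X) (circ : X -> X -> X) (cinv : X -> X).
Variable zero : X.
Hypothesis brace : is_skew_brace add neg circ cinv zero.
Hypothesis sigmaE : forall a b, sigma a b = add (neg a) (circ a b).

Lemma sigma_zero_l b : sigma zero b = b.
Proof.
case: brace => add_group [_ circ_1e _ _ _] _.
have [_ add_1e _ _ _] := add_group.
by rewrite sigmaE (group_inv_unit add_group) circ_1e add_1e.
Qed.

Lemma sigma_zero_r b : sigma b zero = zero.
Proof.
by case: brace => [[_ _ _ add_Ve _] [_ _ circ_e1 _ _] _]; rewrite sigmaE circ_e1 add_Ve.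
Qed.

Lemma tau_zero_r (sigma_inj : forall a, injective (sigma a))
    (sigma_tau : forall a b, sigma (sigma a b) (tau b a) = a) b :
  tau b zero = zero.
Proof.
apply: (sigma_inj b); have := sigma_tau zero b.
by rewrite sigma_zero_l sigma_zero_r.
Qed.

End BraceSigma.

Lemma comm_inv_r (R : pzRingType) (x y y' : R) :
  y' * y = 1 -> y * y' = 1 -> GRing.comm x y -> GRing.comm x y'.
Proof.
move=> yy' y'y cxy; rewrite /GRing.comm.
by rewrite -[x * y']mul1r -yy' -mulrA [y * (x * y')]mulrA -cxy -mulrA y'y mulr1.
Qed.

Section GeneratedSubalgebra.

Variables (k : fieldType) (X : finType) (B : algType k) (h w winv : X -> B).

Lemma comm_gen_subalg (c : B) :
    (forall a, GRing.comm c (h a)) -> (forall a, GRing.comm c (w a)) ->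
    (forall a, GRing.comm c (winv a)) ->
  forall x, in_gen_subalg h w winv x -> GRing.comm c x.
Proof.
move=> ch cw cwinv x; elim=> {x} [a|a|a|a|x y _ cx _ cy|x y _ cx _ cy] //.
- exact/commr_sym/comm_alg.
- exact: commrD.
- exact: commrM.
Qed.

Variable sigma tau : X -> X -> X.
Hypothesis rel : YB_relations sigma tau h w winv.

Lemma comm_w_gen_subalg e :
    (forall b, sigma e b = b) -> (forall b, tau b e = e) ->
  forall x, in_gen_subalg h w winv x -> GRing.comm (w e) x.
Proof.
case: rel => _ [winvK [wK [w_mul [h_conj _]]]] sigma_e tau_e.
have cw b : GRing.comm (w e) (w b) by rewrite /GRing.comm w_mul sigma_e tau_e.
apply: comm_gen_subalg => // [b|b].
- by rewrite /GRing.comm h_conj sigma_e.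
- exact: comm_inv_r (winvK b) (wK b) (cw b).
Qed.

End GeneratedSubalgebra.

Theorem lemma2p15 (k : fieldType) (X : finType)
    (sigma tau : X -> X -> X)
    (add : X -> X -> X) (neg : X -> X) (circ : X -> X -> X) (cinv : X -> X)
    (zero : X)
    (Hsigma_bij : forall a, bijective (sigma a))
    (Hbrace : is_skew_brace add neg circ cinv zero)
    (Hsigma : forall a b, sigma a b = add (neg a) (circ a b))
    (Htau : forall a b, sigma (sigma a b) (tau b a) = a)
    (B : algType k) (h w winv : X -> B)
    (Hrel : YB_relations sigma tau h w winv) :
  forall x : B, in_gen_subalg h w winv x -> w zero * x = x * w zero.
Proof.
apply: (comm_w_gen_subalg Hrel).
- exact: sigma_zero_l Hbrace Hsigma.
- move=> b; apply: tau_zero_r Hbrace Hsigma _ Htau b => a.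
  exact: bij_inj.
Qed.
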